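(* Let $z,z'\in\mathbb C\setminus\mathbb Z$ with $t=zz'\notin\{0,-1,-2,\dots\}$, and let $M_{zz'}$ be defined by $$M_{zz'}(\lambda)=\frac{\prod_{(i,j)\in\lambda}(z+j-i)(z'+j-i)}{(t)_{|\lambda|}}\cdot\frac{(\dim\lambda)^2}{|\lambda|!},\qquad M_{zz'}(\varnothing)=1 .$$ Then $M_{zz'}(\lambda)\neq0$ for every Young diagram $\lambda$. Moreover, $M_{zz'}(\lambda)>0$ for all Young diagrams $\lambda$ if and only if one of the following holds: (i) $z'=\bar z$ (and $z\notin\mathbb Z$); (ii) $z,z'$ are real and both lie in one open interval $(m,m+1)$ with $m\in\mathbb Z$.
   Context: Young diagrams are identified with partitions; $|\lambda|$ is the number of boxes and $(i,j)\in\lambda$ denotes the box in row $i$, column $j$. $\dim\lambda$ is the number of standard Young tableaux of shape $\lambda$. $(t)_n=t(t+1)\cdots(t+n-1)$. *)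

From HB Require Import structures.
From mathcomp Require Import all_boot all_order all_algebra.
From mathcomp Require Import reals.
From mathcomp Require Import complex.
Set Implicit Arguments. Unset Strict Implicit. Unset Printing Implicit Defensive.
Import Order.TTheory GRing.Theory Num.Theory.
Local Open Scope ring_scope.

Definition is_partition (la : seq nat) : bool :=
  sorted (fun a b => (b <= a)%N) la && all (fun x => (0 < x)%N) la.

Definition size_part (la : seq nat) : nat := sumn la.

(* box (i,j) (0-indexed row i, column j) belongs to la *)
Definition in_diagram (la : seq nat) (b : nat * nat) : bool :=
  (b.1 < size la)%N && (b.2 < nth 0%N la b.1)%N.

(* A standard Young tableau of shape la, encoded by f : k |-> box containing
   entry k+1, for k < |la|: f is injective with image inside the diagram
   (hence a bijection onto the boxes), and entries increase weakly-NW to SE: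
   if box f k is weakly north-west of box f l then k <= l. *)
Definition is_SYT (la : seq nat)
  (f : {ffun 'I_(size_part la) -> 'I_(size_part la) * 'I_(size_part la)}) : bool :=
  [forall k, in_diagram la (nat_of_ord (f k).1, nat_of_ord (f k).2)]
  && injectiveb f
  && [forall k, forall l,
        (((f k).1 <= (f l).1)%N && ((f k).2 <= (f l).2)%N) ==> (k <= l)%N].

Arguments is_SYT : clear implicits.

Definition dim_part (la : seq nat) : nat := #|[pred f | is_SYT la f]|.

Definition poch {F : ringType} (t : F) (n : nat) : F :=
  \prod_(k < n) (t + k%:R).

Definition Mzz {F : fieldType} (z z' : F) (la : seq nat) : F :=
  (\prod_(i < size la) \prod_(j < nth 0%N la i)
      ((z + j%:R - i%:R) * (z' + j%:R - i%:R)))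
  / poch (z * z') (size_part la)
  * ((dim_part la) ^ 2)%:R / ((size_part la)`!)%:R.

Definition is_integer {F : ringType} (x : F) : Prop := exists k : int, x = k%:~R.

(* Up to the positive factor (dim la)^2 / |la|!, M_{zz'}(la) is the product of
   h(c) = (z + c)(z' + c) over the contents c = j - i of the boxes of la, divided
   by (zz')_{|la|}; dim la > 0 is witnessed by the row-reading tableau.  This gives
   non-vanishing at once, and in cases (i) and (ii) every h(c) and every zz' + k is
   positive.  Conversely, for two diagrams of the same size the Pochhammer factors
   cancel, so positivity of M makes the ratio of their content products positive.
   Comparing the hooks (a+1, 1^b) and (a, 1^(b+1)), and the diagrams (2,2) and
   (3,1), shows that all h(c), c in Z, are positive multiples of h(1).  As
   h(1) + h(-1) - 2 h(0) = 2, they are then real, hence so are z + z' and zz', which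
   forces z' = conj z or z, z' real; in the real case h(-m-1) h(-m) > 0 with
   m = floor z puts z' in (m, m+1). *)

From mathcomp Require Import all_boot all_order all_algebra.
From mathcomp Require Import reals.
From mathcomp Require Import complex.
From mathcomp Require Import ring lra.
Import Order.TTheory GRing.Theory Num.Theory.
Set Implicit Arguments. Unset Strict Implicit. Unset Printing Implicit Defensive.

Section RowReadingTableau.

Fixpoint row_reading_box (la : seq nat) (k : nat) : nat * nat :=
  if la is a :: l then
    if (k < a)%N then (0%N, k)
    else let b := row_reading_box l (k - a) in (b.1.+1, b.2)
  else (0%N, k).

Lemma row_reading_box_in la k : (k < sumn la)%N ->
  in_diagram la (row_reading_box la k).
Proof.
rewrite /in_diagram; elim: la k => [|a l IHl] k //= lt_k.
case: ifP => //= /negbT; rewrite -leqNgt => le_a_k.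
by apply: IHl; rewrite ltn_subLR.
Qed.

Lemma row_reading_boxK la k : (k < sumn la)%N ->
  (sumn (take (row_reading_box la k).1 la) + (row_reading_box la k).2)%N = k.
Proof.
elim: la k => [|a l IHl] k //= lt_k.
case: ifP => //= /negbT; rewrite -leqNgt => le_a_k.
by rewrite -addnA IHl ?subnKC // ltn_subLR.
Qed.

Lemma row_reading_index_lt la r c r' c' :
  (r < size la)%N -> (c < nth 0%N la r)%N -> (r < r')%N ->
  (sumn (take r la) + c < sumn (take r' la) + c')%N.
Proof.
elim: la r r' => [|a l IHl] r [|r'] //= lt_r lt_c lt_rr'.
case: r lt_r lt_c lt_rr' => [|r] /= lt_r lt_c lt_rr'.
  by rewrite add0n -addnA (leq_trans lt_c) ?leq_addr.
by rewrite -!addnA ltn_add2l IHl.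
Qed.

Lemma size_le_sumn la : all (fun x => (0 < x)%N) la -> (size la <= sumn la)%N.
Proof.
by elim: la => [|a l IHl] //= /andP[a_gt0 /IHl]; rewrite -add1n; apply: leq_add.
Qed.

Variable la : seq nat.
Hypothesis la_pos : all (fun x => (0 < x)%N) la.

Local Notation n := (size_part la).

(* Entry k+1 goes to the k-th box in row-reading order; the [insubd] casts into
   ['I_n] are exact, see [row_reading_tableauE]. *)

Definition row_reading_tableau : {ffun 'I_n -> 'I_n * 'I_n} :=
  [ffun k : 'I_n => (insubd k (row_reading_box la k).1,
                     insubd k (row_reading_box la k).2)].

Lemma row_reading_tableauE (k : 'I_n) :
  ((row_reading_tableau k).1 : nat) = (row_reading_box la k).1 /\
  ((row_reading_tableau k).2 : nat) = (row_reading_box la k).2.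
Proof.
have /andP[lt_row _] := row_reading_box_in (ltn_ord k).
have lt_col : ((row_reading_box la k).2 < n)%N.
  by rewrite (leq_ltn_trans _ (ltn_ord k)) // -{2}(row_reading_boxK (ltn_ord k)) leq_addl.
rewrite !ffunE /= !val_insubd lt_col.
by rewrite (leq_trans lt_row (size_le_sumn la_pos)).
Qed.

Lemma row_reading_tableau_SYT : is_SYT la row_reading_tableau.
Proof.
have E1 k := (row_reading_tableauE k).1; have E2 k := (row_reading_tableauE k).2.
have idxK (k : 'I_n) := row_reading_boxK (ltn_ord k).
rewrite /is_SYT -andbA; apply/and3P; split.
- by apply/forallP => k; rewrite E1 E2 -surjective_pairing row_reading_box_in.
- apply/injectiveP => k l /(congr1 (fun b => (val b.1, val b.2))).
  rewrite /= !E1 !E2 => -[e1 e2].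
  by apply: val_inj; rewrite /= -idxK -[val l]idxK e1 e2.
apply/forallP => k; apply/forallP => l; apply/implyP; rewrite !E1 !E2.
rewrite leq_eqVlt => /andP[/orP[/eqP e_r | lt_r] le_c]; rewrite -(idxK k) -(idxK l).
  by rewrite e_r leq_add2l.
have /andP[lt_k lt_c] := row_reading_box_in (ltn_ord k).
by apply: ltnW; apply: row_reading_index_lt.
Qed.

End RowReadingTableau.

Lemma dim_part_gt0 la : is_partition la -> (0 < dim_part la)%N.
Proof.
case/andP=> _ la_pos; apply/card_gt0P.
by exists (row_reading_tableau la); rewrite inE row_reading_tableau_SYT.
Qed.

Local Open Scope ring_scope.

Definition content_weight {F : pzRingType} (z z' : F) (c : int) : F :=
  (z + c%:~R) * (z' + c%:~R).

Definition content_prod {F : pzRingType} (z z' : F) (la : seq nat) : F :=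
  \prod_(i < size la) \prod_(j < nth 0%N la i) content_weight z z' (j%:Z - i%:Z).

Lemma MzzE (F : fieldType) (z z' : F) la :
  Mzz z z' la = content_prod z z' la / poch (z * z') (size_part la)
                * ((dim_part la ^ 2)%:R / (size_part la)`!%:R).
Proof.
rewrite /Mzz /content_prod /content_weight mulrA; congr (_ / _ * _ / _).
by apply: eq_bigr => i _; apply: eq_bigr => j _; rewrite intrB !addrA.
Qed.

Lemma is_partition_hook a b : (0 < a)%N -> is_partition (a :: nseq b 1%N).
Proof.
move=> a_gt0; rewrite /is_partition /= a_gt0 all_nseq orbT andbT.
by case: b => //= b; rewrite a_gt0; elim: b.
Qed.

Lemma size_part_hook a b : size_part (a :: nseq b 1%N) = (a + b)%N.
Proof. by rewrite /size_part /= sumn_nseq mul1n. Qed.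

Lemma content_prod_hook (F : pzRingType) (z z' : F) a b :
  content_prod z z' (a :: nseq b 1%N) =
  (\prod_(j < a) content_weight z z' j) * \prod_(i < b) content_weight z z' (Negz i).
Proof.
rewrite /content_prod /= big_ord_recl size_nseq; congr (_ * _).
  by apply: eq_bigr => j _; rewrite subr0.
by apply: eq_bigr => i _; rewrite /= nth_nseq ltn_ord big_ord1 NegzE sub0r.
Qed.

Section PositiveRatios.

Variable F : numFieldType.
Implicit Types x y w p : F.

Lemma ratio_gt0_neq0 x y : 0 < x / y -> y != 0.
Proof. by apply: contraTneq => ->; rewrite invr0 mulr0 ltxx. Qed.

Lemma ratio_gt0C x y : 0 < x / y -> 0 < y / x.
Proof. by rewrite -invr_gt0 invf_div. Qed.

Lemma ratio_gt0_trans y x w : 0 < x / y -> 0 < y / w -> 0 < x / w.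
Proof.
move=> xy yw; have -> : x / w = x / y * (y / w).
  by rewrite mulrA divfK // (ratio_gt0_neq0 xy).
exact: mulr_gt0.
Qed.

Lemma ratio_mul2l p x y : p != 0 -> (p * x) / (p * y) = x / y.
Proof. by move=> p_neq0; rewrite invfM mulrACA divff // mul1r. Qed.

End PositiveRatios.

Lemma ratio_gt0_mul (F : realFieldType) (x y : F) : 0 < x / y -> 0 < x * y.
Proof.
move=> xy; have y_neq0 := ratio_gt0_neq0 xy.
have -> : x * y = x / y * y ^+ 2 by rewrite expr2 mulrA divfK.
by rewrite mulr_gt0 // exprn_even_gt0.
Qed.

Lemma addr_int_neq0 (F : nzRingType) (z : F) (c : int) :
  ~ is_integer z -> z + c%:~R != 0.
Proof.
move=> z_nint; apply/eqP => /addr0_eq ez; apply: z_nint.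
by exists (- c); rewrite intrN -ez opprK.
Qed.

Lemma content_weight_neq0 (F : idomainType) (z z' : F) c :
  ~ is_integer z -> ~ is_integer z' -> content_weight z z' c != 0.
Proof. by move=> z_nint z'_nint; rewrite mulf_neq0 ?addr_int_neq0. Qed.

Lemma content_prod_neq0 (F : idomainType) (z z' : F) la :
  ~ is_integer z -> ~ is_integer z' -> content_prod z z' la != 0.
Proof.
move=> z_nint z'_nint; apply/prodf_neq0 => i _; apply/prodf_neq0 => j _.
exact: content_weight_neq0.
Qed.

Lemma poch_neq0 (F : idomainType) (t : F) n :
  (forall k : nat, t != - k%:R) -> poch t n != 0.
Proof. by move=> t_neq; apply/prodf_neq0 => k _; rewrite addr_eq0. Qed.

Lemma Mzz_neq0 (F : numFieldType) (z z' : F) la :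
  is_partition la -> ~ is_integer z -> ~ is_integer z' ->
  (forall k : nat, z * z' != - k%:R) -> Mzz z z' la != 0.
Proof.
move=> la_part z_nint z'_nint t_neq.
rewrite MzzE !mulf_neq0 ?invr_eq0 ?content_prod_neq0 ?poch_neq0 //.
  by rewrite pnatr_eq0 -lt0n expn_gt0 dim_part_gt0.
by rewrite pnatr_eq0 -lt0n fact_gt0.
Qed.

Lemma Mzz_gt0 (F : numFieldType) (z z' : F) la : is_partition la ->
  (forall c, 0 < content_weight z z' c) -> (forall k : nat, 0 < z * z' + k%:R) ->
  0 < Mzz z z' la.
Proof.
move=> la_part cw_gt0 t_gt0.
rewrite MzzE !(mulr_gt0, invr_gt0) ?ltr0n ?expn_gt0 ?dim_part_gt0 ?fact_gt0 //.
  by apply: prodr_gt0 => i _; apply: prodr_gt0.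
exact: prodr_gt0.
Qed.

Lemma mul_gt0_unit_interval (F : numDomainType) (x y : F) (m : int) :
  m%:~R < x < m%:~R + 1 -> m%:~R < y < m%:~R + 1 -> 0 < x * y.
Proof.
case/andP=> mx xm /andP[my ym]; have [m_ge0 | m_lt0] := lerP 0 m.
  have m_ge0' : 0 <= m%:~R :> F by rewrite ler0z.
  by rewrite mulr_gt0 // (le_lt_trans m_ge0').
have m1_le0 : m%:~R + 1 <= 0 :> F by rewrite -[1]/(1%:~R) -intrD lerz0 lezD1.
by rewrite nmulr_rgt0 (lt_le_trans xm, lt_le_trans ym).
Qed.

Lemma Mzz_unit_interval_gt0 (F : numFieldType) (z z' : F) (m : int) la :
  m%:~R < z < m%:~R + 1 -> m%:~R < z' < m%:~R + 1 -> is_partition la ->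
  0 < Mzz z z' la.
Proof.
move=> mz mz' la_part; apply: Mzz_gt0 => // [c | k].
  apply: (@mul_gt0_unit_interval _ _ _ (m + c));
  by rewrite intrD addrAC !ltrD2r.
rewrite ltr_wpDr //; exact: mul_gt0_unit_interval mz mz'.
Qed.

Lemma Mzz_conj_gt0 (C : numClosedFieldType) (z : C) la :
  ~ is_integer z -> is_partition la -> 0 < Mzz z z^* la.
Proof.
move=> z_nint la_part; apply: Mzz_gt0 => // [c | k].
  rewrite /content_weight.
  have -> : z^* + c%:~R = (z + c%:~R)^* by rewrite rmorphD rmorph_int.
  by rewrite mul_conjC_gt0 addr_int_neq0.
rewrite ltr_wpDr // mul_conjC_gt0.
by have := addr_int_neq0 0 z_nint; rewrite addr0.
Qed.

Section Necessity.

Variable F : numFieldType.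
Variables z z' : F.
Hypotheses (z_nint : ~ is_integer z) (z'_nint : ~ is_integer z').
Hypothesis Mzz_pos : forall la, is_partition la -> 0 < Mzz z z' la.

Local Notation cw := (content_weight z z').
Local Notation cprod := (content_prod z z').

Lemma content_prod_ratio_gt0 la mu : is_partition la -> is_partition mu ->
  size_part la = size_part mu -> 0 < cprod la / cprod mu.
Proof.
have cprod_poch nu : is_partition nu -> 0 < cprod nu / poch (z * z') (size_part nu).
  move=> nu_part; have := Mzz_pos nu_part; rewrite MzzE pmulr_lgt0 //.
  by rewrite divr_gt0 ?ltr0n ?expn_gt0 ?dim_part_gt0 ?fact_gt0.
move=> la_part mu_part eq_size; apply: (ratio_gt0_trans (cprod_poch _ la_part)).
by apply: ratio_gt0C; rewrite eq_size cprod_poch.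
Qed.

Lemma content_weight_hook_ratio_gt0 a b : 0 < cw a.+1 / cw (Negz b).
Proof.
have := content_prod_ratio_gt0 (is_partition_hook b (ltn0Sn a.+1))
  (is_partition_hook b.+1 (ltn0Sn a)).
rewrite !size_part_hook addnS => /(_ erefl).
rewrite !content_prod_hook (big_ord_recr a.+1) (big_ord_recr b) /=.
set row := \prod_(j < a.+1) _; set col := \prod_(i < b) _.
have hook_neq0 : row * col != 0.
  by rewrite -content_prod_hook content_prod_neq0.
rewrite [row * _ * col]mulrAC [row * (col * _)]mulrA.
by rewrite ratio_mul2l.
Qed.

(* Hooks only compare positive with negative contents; the diagonal content 0
   is reached by moving the box (1,1) of (2,2) to (0,2). *)
Lemma content_weight_square_ratio_gt0 : 0 < cw 0 / cw 2.
Proof.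
have := @content_prod_ratio_gt0 [:: 2; 2]%N [:: 3; 1]%N isT isT erefl.
rewrite /content_prod /= !big_ord_recr !big_ord0 /= !mul1r !subr0 subrr sub0r.
set P := cw 0 * cw 1 * cw (-1).
have P_neq0 : P != 0 by rewrite /P !mulf_neq0 ?addr_int_neq0.
have -> : cw 0 * cw 1 * (cw (-1) * cw 0) = P * cw 0 by rewrite /P -!mulrA.
by rewrite [_ * cw (-1)]mulrAC ratio_mul2l.
Qed.

Lemma content_weight_ratio_gt0 c : 0 < cw c / cw 1.
Proof.
have col_ratio b : 0 < cw (Negz b) / cw 1.
  exact: ratio_gt0C (content_weight_hook_ratio_gt0 0 b).
have row_ratio a : 0 < cw a.+1 / cw 1.
  exact: ratio_gt0_trans (content_weight_hook_ratio_gt0 a 0) (col_ratio 0%N).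
case: c => [[|a] | b] //.
exact: ratio_gt0_trans content_weight_square_ratio_gt0 (row_ratio 1%N).
Qed.

Lemma sum_prod_real : z + z' \is Num.real /\ z * z' \is Num.real.
Proof.
have w_neq0 := ratio_gt0_neq0 (content_weight_ratio_gt0 0).
have real_ratio c : cw c / cw 1 \is Num.real := gtr0_real (content_weight_ratio_gt0 c).
have second_difference : cw 1 + cw (-1) - 2 * cw 0 = 2.
  by rewrite /content_weight; ring.
have w_real : cw 1 \is Num.real.
  set d := 1 + cw (-1) / cw 1 - 2 * (cw 0 / cw 1).
  have wd : cw 1 * d = 2.
    by rewrite -second_difference /d; field.
  have d_neq0 : d != 0.
    by apply/eqP => d0; move/eqP: wd; rewrite d0 mulr0 eq_sym pnatr_eq0.
  have -> : cw 1 = 2 / d by rewrite -wd mulfK.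
  rewrite rpred_div ?rpred_nat // /d rpredB ?rpredD ?rpred1 ?real_ratio //.
  by rewrite rpredM ?rpred_nat ?real_ratio.
have t_real : z * z' \is Num.real.
  have -> : z * z' = cw 0 / cw 1 * cw 1 by rewrite divfK // /content_weight !addr0.
  exact: rpredM (real_ratio 0) w_real.
split=> //; have -> : z + z' = cw 1 - z * z' - 1 by rewrite /content_weight; ring.
by rewrite !rpredB ?rpred1.
Qed.

End Necessity.

Lemma exists_unit_interval (R : archiRealFieldType) (x : R) : ~ is_integer x ->
  exists m : int, m%:~R < x < m%:~R + 1.
Proof.
move=> x_nint; exists (Num.floor x).
have /andP[le_mx] := floor_itv x; rewrite intrD => ->.
rewrite andbT lt_neqAle le_mx andbT.
by apply/eqP => ex; apply: x_nint; exists (Num.floor x).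
Qed.

Lemma unit_interval_of_ratio (R : realFieldType) (x y : R) (m : int) :
  m%:~R < x < m%:~R + 1 ->
  0 < content_weight x y (- m - 1) / content_weight x y (- m) ->
  m%:~R < y < m%:~R + 1.
Proof.
case/andP=> mx xm /ratio_gt0_mul; rewrite /content_weight intrB !intrN.
set k : R := m%:~R.
have -> : (x + (- k - 1)) * (y + (- k - 1)) * ((x + - k) * (y + - k)) =
          ((x - k - 1) * (x - k)) * ((y - k - 1) * (y - k)) by ring.
have x_between : (x - k - 1) * (x - k) < 0 by rewrite pmulr_llt0; lra.
rewrite nmulr_rgt0 // => y_between; apply/andP; split; nra.
Qed.

Local Open Scope complex_scope.

Lemma complex_real_sum_prod (R : rcfType) (z z' : R[i]) :
  z + z' \is Num.real -> z * z' \is Num.real ->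
  z' = z^* \/ (z \is Num.real /\ z' \is Num.real).
Proof.
case: z z' => [a b] [a' b'].
rewrite -[(a +i* b) + _]/((a + a') +i* (b + b')).
rewrite -[(a +i* b) * _]/((a * a' - b * b') +i* (a * b' + b * a')) !complex_real.
move=> /eqP/addr0_eq <-; have -> : a * - b + b * a' = b * (a' - a) by ring.
rewrite mulf_eq0 subr_eq0 => /orP[/eqP-> | /eqP->]; last by left.
by right; rewrite oppr0.
Qed.

Lemma complex_content_weight (R : rcfType) (x y : R) c :
  content_weight x%:C y%:C c = (content_weight x y c)%:C.
Proof. by rewrite /content_weight rmorphM !rmorphD /= rmorph_int. Qed.

Lemma complex_unit_interval (R : rcfType) (x : R) (m : int) :
  (m%:~R < x%:C < m%:~R + 1) = (m%:~R < x < m%:~R + 1).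
Proof.
have -> : m%:~R + 1 = (m%:~R + 1)%:C :> R[i] by rewrite rmorphD rmorph1 rmorph_int.
by rewrite -[m%:~R : R[i]](rmorph_int (real_complex R)) !ltcR.
Qed.

Lemma Mzz_pos_cases (R : realType) (z z' : R[i]) :
  ~ is_integer z -> ~ is_integer z' ->
  (forall la, is_partition la -> 0 < Mzz z z' la) ->
  z' = z^* \/
  (z \is Num.real /\ z' \is Num.real /\
   exists m : int, (m%:~R < z < m%:~R + 1) /\ (m%:~R < z' < m%:~R + 1)).
Proof.
move=> z_nint z'_nint Mzz_pos.
have ratio := content_weight_ratio_gt0 z_nint z'_nint Mzz_pos.
have [s_real t_real] := sum_prod_real z_nint z'_nint Mzz_pos.
have [-> | [z_real z'_real]] := complex_real_sum_prod s_real t_real; [by left | right].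
do 2!split=> //.
move/complex_realP: z_real z_nint ratio => [x ->] x_nint.
move/complex_realP: z'_real => [y ->] ratio.
have [m mx] : exists m : int, m%:~R < x < m%:~R + 1.
  apply: exists_unit_interval => -[k ek].
  by apply: x_nint; exists k; rewrite ek rmorph_int.
have my : m%:~R < y < m%:~R + 1.
  apply: (unit_interval_of_ratio mx).
  have := ratio_gt0_trans (ratio (- m - 1)) (ratio_gt0C (ratio (- m))).
  by rewrite !complex_content_weight -fmorph_div ltcE /= eqxx.
by exists m; rewrite !complex_unit_interval.
Qed.

Theorem proposition2p2 (R : realType) (z z' : R[i]) :
  ~ is_integer z -> ~ is_integer z' ->
  (forall n : nat, z * z' != - n%:R) ->
  (forall la : seq nat, is_partition la -> Mzz z z' la != 0) /\
  ((forall la : seq nat, is_partition la -> 0 < Mzz z z' la) <->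
   (z' = z^* \/
    (z \is Num.real /\ z' \is Num.real /\
     exists m : int, (m%:~R < z < m%:~R + 1) /\ (m%:~R < z' < m%:~R + 1)))).
Proof.
move=> z_nint z'_nint t_neq; split=> [la la_part|]; first exact: Mzz_neq0.
split; first exact: Mzz_pos_cases.
case=> [-> | [_ [_ [m [mz mz']]]]] la la_part; first exact: Mzz_conj_gt0.
exact: Mzz_unit_interval_gt0 mz mz' la_part.
Qed.
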